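(* Let $\Phi_1,\Phi_2$ be two convex growth functions with $\Phi_2\in \mathscr{U}$. Let $s>0$ and let $\mu$ be a positive Borel measure on $\mathbb{C}_+$. Then the following assertions are equivalent. (a) There is a constant $C>0$ such that for any finite interval $I\subset\mathbb{R}$, $\mu(Q_I)\le \dfrac{C}{\Phi_2\circ\Phi_1^{-1}\left(\frac{1}{|I|^s}\right)}$. (b) There exists a constant $C>0$ such that $$\sup_{z=x+iy\in \mathbb{C}_+}\int_{\mathbb{C}_+}\Phi_2\left(\Phi_1^{-1}\left(\frac{1}{y^s}\right)\frac{y^{2s}}{|z-\bar{w}|^{2s}}\right)d\mu(w)\le C<\infty.$$ Moreover, the (best) constants in (a) and (b) are equivalent.
   Context: $\mathbb{C}_+=\{x+iy: y>0\}$. A growth function is a continuous nondecreasing function from $[0,\infty)$ onto $[0,\infty)$; $\Phi^{-1}$ is its inverse. $\mathscr{U}^q$ ($q\ge1$) is the set of growth functions $\Phi$ with $\Phi(st)\le Ct^q\Phi(s)$ for $s>0,t\ge1$ and $t\mapsto\Phi(t)/t$ nondecreasing; $\mathscr{U}=\bigcup_{q\ge1}\mathscr{U}^q$. For an interval $I\subset\mathbb{R}$, $Q_I=\{x+iy:x\in I,0<y<|I|\}$. *)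

From HB Require Import structures.
From mathcomp Require Import all_boot all_order all_algebra.
From mathcomp Require Import all_classical all_reals all_analysis.
Set Implicit Arguments. Unset Strict Implicit. Unset Printing Implicit Defensive.
Import Order.TTheory GRing.Theory Num.Theory.
Import numFieldNormedType.Exports.
Local Open Scope classical_set_scope.
Local Open Scope ring_scope.

Section Defs.
Variable R : realType.

(* Growth function: continuous nondecreasing function from [0,oo) onto [0,oo).
   Functions are R -> R; only their values on [0,oo) matter. *)
Definition growth_function (Phi : R -> R) : Prop :=
  {within `[0, +oo[%classic, continuous Phi} /\
  {in `[0, +oo[%classic &, {homo Phi : x y / x <= y}} /\
  Phi @` `[0, +oo[%classic = `[0, +oo[%classic.

Definition convex_on_nonneg (Phi : R -> R) : Prop :=
  forall x y l : R, 0 <= x -> 0 <= y -> 0 <= l <= 1 ->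
    Phi (l * x + (1 - l) * y) <= l * Phi x + (1 - l) * Phi y.

Definition convex_growth_function (Phi : R -> R) : Prop :=
  growth_function Phi /\ convex_on_nonneg Phi.

Definition classU (q : R) (Phi : R -> R) : Prop :=
  growth_function Phi /\
  (exists C : R, 0 < C /\
     forall s t : R, 0 < s -> 1 <= t -> Phi (s * t) <= C * t `^ q * Phi s) /\
  {in `]0, +oo[%classic &, {homo (fun t => Phi t / t) : x y / x <= y}}.

Definition classU_any (Phi : R -> R) : Prop := exists q : R, 1 <= q /\ classU q Phi.

(* Inverse of a growth function: Phi^{-1}(u) = sup {t >= 0 | Phi t <= u}.
   For u > 0 and Phi a convex growth function this is the unique t >= 0
   with Phi t = u. *)
Definition ginv (Phi : R -> R) (u : R) : R :=
  sup [set t : R | 0 <= t /\ Phi t <= u].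

(* Upper half-plane, as a subset of R x R (x + iy <-> (x, y)). *)
Definition upper_half_plane : set (R * R) := [set z | 0 < z.2].

Definition carleson_box (a b : R) : set (R * R) :=
  [set z | a <= z.1 <= b /\ 0 < z.2 < b - a].

Definition dist_conj2 (z w : R * R) : R :=
  (z.1 - w.1) ^+ 2 + (z.2 + w.2) ^+ 2.

End Defs.

From HB Require Import structures.
From mathcomp Require Import all_boot all_order all_algebra.
From mathcomp Require Import all_classical all_reals all_analysis.
From mathcomp Require Import ring lra measurable_realfun.
Import Order.TTheory GRing.Theory Num.Theory.
Import numFieldNormedType.Exports.
Local Open Scope classical_set_scope.
Local Open Scope ring_scope.
Set Implicit Arguments. Unset Strict Implicit. Unset Printing Implicit Defensive.

(* For [z = x + iy] write [A = Phi1^{-1}(y^{-s})], [rho = 2^s] and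
   [K(z, w) = y^{2s} / |z - conj w|^{2s}].
   (b) => (a): if [z] lies above the centre of [I] at height [|I|], then
   [K(z, .) >= 5^{-s}] on [Q_I], so [Phi2(A / 5^s) mu(Q_I)] is at most the
   integral in (b), and the upper type of [Phi2] compares [Phi2(A / 5^s)] with
   [Phi2(A)].
   (a) => (b): the boxes [B_k = Q_I] with [I] of length [2^{k+1} y] centred at
   [x] cover the half-plane, and [K(z, .) <= rho^{2 - 2k}] outside [B_{k-1}].
   Convexity of [Phi1] gives [Phi1^{-1}(u / t) >= Phi1^{-1}(u) / t] for
   [t >= 1], so (a) yields [mu(B_k) <= C / Phi2(A / rho^{k+1})], while the upper
   type of [Phi2] bounds [Phi2(A rho^{2 - 2k})] by a multiple of
   [rho^{-k} Phi2(A / rho^{k+1})]: the integral is dominated by a geometric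
   series. *)

Section growth_function.
Variables (R : realType) (Phi : R -> R).
Hypotheses (gPhi : growth_function Phi) (cvxPhi : convex_on_nonneg Phi).

Lemma growth_function_le x y : 0 <= x -> x <= y -> Phi x <= Phi y.
Proof.
move=> x0 xy; have [_ [homPhi _]] := gPhi.
by apply: homPhi; rewrite // inE /= in_itv /= andbT // (le_trans x0).
Qed.

Lemma growth_function_onto u : 0 <= u -> exists2 t, 0 <= t & Phi t = u.
Proof.
move=> u0; have [_ [_ ontoPhi]] := gPhi.
have : `[0, +oo[%classic u by rewrite /= in_itv /= andbT.
by rewrite -ontoPhi => -[t /=]; rewrite in_itv /= andbT; exists t.
Qed.

Lemma growth_function_ge0 x : 0 <= x -> 0 <= Phi x.
Proof.
move=> x0; have [_ [_ ontoPhi]] := gPhi.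
have : (Phi @` `[0, +oo[%classic) (Phi x) by exists x; rewrite //= in_itv /= andbT.
by rewrite ontoPhi /= in_itv /= andbT.
Qed.

Lemma growth_function0 : Phi 0 = 0.
Proof.
have [t t0 Phit] := growth_function_onto (lexx 0).
by apply/eqP; rewrite eq_le -{2}Phit growth_function_le ?growth_function_ge0.
Qed.

Lemma convex_growthZ_le l x : 0 <= l <= 1 -> 0 <= x -> Phi (l * x) <= l * Phi x.
Proof.
move=> l01 x0; have := cvxPhi x0 (lexx 0) l01.
by rewrite !mulr0 !addr0 growth_function0 mulr0 addr0.
Qed.

Lemma has_sup_ginv u : 0 <= u -> has_sup [set t | 0 <= t /\ Phi t <= u].
Proof.
move=> u0; split; first by exists 0; split; rewrite ?growth_function0.
have [T T0 PhiT] := growth_function_onto (addr_ge0 u0 ler01).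
exists T => t [t0 tu]; rewrite leNgt; apply/negP => Tt.
by have := growth_function_le T0 (ltW Tt); rewrite PhiT; lra.
Qed.

Lemma ginv_ub u t : 0 <= t -> Phi t <= u -> t <= ginv Phi u.
Proof.
move=> t0 tu; apply: sup_upper_bound => //; apply: has_sup_ginv.
exact: le_trans (growth_function_ge0 t0) tu.
Qed.

Lemma ginv_ge0 u : 0 <= u -> 0 <= ginv Phi u.
Proof. by move=> u0; apply: ginv_ub; rewrite ?growth_function0. Qed.

Lemma ginv_gt0 u : 0 < u -> 0 < ginv Phi u.
Proof.
move=> u_gt0; have [t t0 Phit] := growth_function_onto (ltW u_gt0).
have t_gt0 : 0 < t.
  rewrite lt_def t0 andbT; apply: contraTneq u_gt0 => t_eq0.
  by rewrite -Phit t_eq0 growth_function0 ltxx.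
by apply: lt_le_trans t_gt0 _; apply: ginv_ub; rewrite ?Phit.
Qed.

Lemma ginvZ_ge l u : 0 <= l <= 1 -> 0 <= u -> l * ginv Phi u <= ginv Phi (l * u).
Proof.
move=> /andP[l0 l1] u0; have [->|l_neq0] := eqVneq l 0.
  by rewrite !mul0r ginv_ge0.
have l_gt0 : 0 < l by rewrite lt_def l_neq0.
rewrite mulrC -ler_pdivlMr //; apply: ge_sup.
  by exists 0; split; rewrite ?growth_function0.
move=> t [t0 tu]; rewrite ler_pdivlMr // mulrC; apply: ginv_ub; first exact: mulr_ge0.
apply: le_trans (convex_growthZ_le _ t0) _; first by rewrite l0.
exact: ler_wpM2l.
Qed.

End growth_function.

Definition upper_type (R : realType) (q C : R) (Phi : R -> R) :=
  forall s t : R, 0 < s -> 1 <= t -> Phi (s * t) <= C * t `^ q * Phi s.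

Section upper_type.
Variables (R : realType) (Phi : R -> R) (q C : R).
Hypotheses (gPhi : growth_function Phi) (cvxPhi : convex_on_nonneg Phi).
Hypotheses (C_gt0 : 0 < C) (q_ge1 : 1 <= q) (PhiU : upper_type q C Phi).

Lemma upper_type_gt0 x : 0 < x -> 0 < Phi x.
Proof.
move=> x_gt0; rewrite lt_def growth_function_ge0 ?ltW // andbT.
apply/eqP => Phix0; have [T T0 PhiT] := growth_function_onto gPhi ler01.
have [xT|Tx] := leP x T.
- have := PhiU x_gt0 (_ : 1 <= T / x); rewrite ler_pdivlMr // mul1r => /(_ xT).
  by rewrite mulrC divfK ?gt_eqF // PhiT Phix0 mulr0; lra.
- by have := growth_function_le gPhi T0 (ltW Tx); rewrite PhiT Phix0; lra.
Qed.

(* Convexity for [m <= 1], the upper type for [m > 1], where [q >= 1] gives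
   [m ^ q <= m * L ^ (q - 1)]. *)
Lemma upper_typeZ_le X m L : 0 < X -> 0 < m -> m <= L -> 1 <= L ->
  Phi (m * X) <= (1 + C * L `^ (q - 1)) * m * Phi X.
Proof.
move=> X_gt0 m_gt0 mL L1; have PhiX0 := growth_function_ge0 gPhi (ltW X_gt0).
have CL0 : 0 <= C * L `^ (q - 1) by rewrite mulr_ge0 ?powR_ge0 ?ltW.
have [m1|m1] := leP m 1.
  apply: le_trans (convex_growthZ_le gPhi cvxPhi _ (ltW X_gt0)) _; first by rewrite ltW.
  rewrite -mulrA; apply: ler_peMl; first exact: mulr_ge0 (ltW m_gt0) PhiX0.
  by rewrite lerDl.
rewrite [m * X]mulrC; apply: le_trans (PhiU X_gt0 (ltW m1)) _.
have mq : m `^ q = m * m `^ (q - 1).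
  by rewrite mulr_powRB1 ?(ltW m_gt0) ?(lt_le_trans ltr01 q_ge1).
have mL' : m `^ (q - 1) <= L `^ (q - 1).
  by apply: ge0_ler_powR; rewrite ?nnegrE ?subr_ge0 ?(ltW m_gt0) ?(le_trans (ltW m_gt0) mL).
have mP0 : 0 <= m * Phi X := mulr_ge0 (ltW m_gt0) PhiX0.
have CmP0 : 0 <= C * (m * Phi X) := mulr_ge0 (ltW C_gt0) mP0.
rewrite mq; nra.
Qed.

End upper_type.

Section integral_bounds.
Context d (T : measurableType d) (R : realType).
Variable mu : {measure set T -> \bar R}.
Local Open Scope ereal_scope.

Lemma measure_le_integral (D B : set T) (f : T -> \bar R) (m : R) :
  measurable D -> measurable B -> B `<=` D -> (0 <= m)%R ->
  measurable_fun D f -> (forall x, D x -> 0 <= f x) ->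
  (forall x, B x -> m%:E <= f x) ->
  m%:E * mu B <= \int[mu]_(x in D) f x.
Proof.
move=> mD mB BD m0 mf f0 mf_ge; rewrite -integral_cst //.
apply: le_trans (ge0_subset_integral mu mB mD mf f0 BD).
by apply: ge0_le_integral => //; exact: measurable_funS mD BD mf.
Qed.

Lemma integral_le_cover_nneseries (D : set T) (B : nat -> set T) (f : T -> R)
    (c : nat -> R) :
  measurable D -> (forall k, measurable (B k)) -> (forall k, B k `<=` D) ->
  (forall k, (0 <= c k)%R) ->
  measurable_fun D (EFin \o f) -> (forall x, D x -> (0 <= f x)%R) ->
  (forall x, D x -> exists2 k, B k x & (f x <= c k)%R) ->
  \int[mu]_(x in D) (f x)%:E <= \sum_(k <oo) (c k)%:E * mu (B k).
Proof.
move=> mD mB BD c0 mf f0 cover.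
pose u k x := (c k * \1_(B k) x)%:E.
have u0 k x : 0 <= u k x by rewrite lee_fin mulr_ge0 // indicE ler0n.
have mu_ k : measurable_fun D (u k).
  by apply/measurable_EFinP/measurable_funM => //; exact: measurable_indic.
have f_le x : D x -> (f x)%:E <= \sum_(k <oo) u k x.
  move=> Dx; have [k Bk fk] := cover x Dx.
  apply: le_trans (nneseries_lim_ge k.+1 (fun n _ _ => u0 n x)).
  rewrite big_nat_recr //= -[X in X <= _]add0e; apply: leeD.
    by apply: sume_ge0 => n _; exact: u0.
  by rewrite /u indicE mem_set // mulr1 lee_fin.
have mS : measurable_fun D (fun x => \sum_(k <oo) u k x).
  exact: ge0_emeasurable_sum (fun k x _ _ => u0 k x) (fun k _ => mu_ k).
have f0' x : D x -> 0 <= (f x)%:E by move=> Dx; rewrite lee_fin f0.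
apply: le_trans (ge0_le_integral mu mD f0' mf mS f_le) _.
rewrite integral_nneseries //; apply: lee_nneseries => [k _ _|k _].
  by apply: integral_ge0 => x _; exact: u0.
under eq_integral do rewrite /u EFinM.
have indic0 x : D x -> 0 <= (\1_(B k) x : R)%:E by move=> _; rewrite lee_fin indicE ler0n.
have m_indic : measurable_fun D (fun x => (\1_(B k) x : R)%:E).
  by apply/measurable_EFinP; exact: measurable_indic.
by rewrite (ge0_integralZl_EFin mu mD indic0 m_indic) // integral_indic // setIidl.
Qed.

End integral_bounds.

Lemma nneseries_geometric (R : realType) (a r : R) : (0 <= r < 1)%R ->
  (\sum_(k <oo) (a * r ^+ k)%:E = (a / (1 - r))%:E)%E.
Proof.
move=> /andP[r0 r1].
have cvg_geo : series (geometric a r) @ \oo --> a * (1 - r)^-1.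
  by apply: cvg_geometric_series; rewrite ger0_norm.
rewrite -(cvg_lim _ cvg_geo) // -EFin_lim; last exact: cvgP cvg_geo.
congr (lim (_ @ \oo)); apply/funext => n /=; by rewrite sumEFin.
Qed.

Lemma powRX (R : realType) (a p : R) n : 0 <= a -> (a ^+ n) `^ p = (a `^ p) ^+ n.
Proof.
move=> a0; rewrite -powR_mulrn // -powRrM mulrC powRrM powR_mulrn //.
exact: powR_ge0.
Qed.

Section upper_half_plane.
Variable R : realType.
Implicit Types (a b s : R) (z w : R * R).

Lemma measurable_upper_half_plane : measurable (@upper_half_plane R).
Proof.
have := @measurable_snd _ _ R R measurableT _ (measurable_itv `]0, +oo[%R).
by rewrite setTI; congr measurable; apply/seteqP; split => z /=; rewrite in_itv /= andbT.
Qed.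

Lemma measurable_carleson_box a b : measurable (carleson_box a b).
Proof.
have := @measurable_fst _ _ R R measurableT _ (measurable_itv `[a, b]%R).
have := @measurable_snd _ _ R R measurableT _ (measurable_itv `]0, b - a[%R).
rewrite !setTI => m2 m1; have := measurableI _ _ m1 m2.
by congr measurable; apply/seteqP; split => z /=; rewrite !in_itv.
Qed.

Lemma carleson_box_sub a b : carleson_box a b `<=` @upper_half_plane R.
Proof. by move=> z [_ /andP[]]. Qed.

Definition kernel s z w := z.2 `^ (2 * s) / dist_conj2 z w `^ s.

Lemma kernel_ge0 s z w : 0 <= kernel s z w.
Proof. by rewrite divr_ge0 ?powR_ge0. Qed.

Lemma measurable_kernel_comp (Phi : R -> R) s z A :
  growth_function Phi -> 0 <= A ->
  measurable_fun (@upper_half_plane R) (fun w => (Phi (A * kernel s z w))%:E).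
Proof.
move=> gPhi A0; apply/measurable_funTS/measurable_EFinP.
(* [Phi] is only monotone on [[0, +oo[], hence the detour through [Phi (max x 0)]. *)
pose Phi_nonneg x := Phi (Num.max x 0).
have Phi_nonneg_nd : {homo Phi_nonneg : x y / x <= y}.
  move=> x y xy; apply: (growth_function_le gPhi); first by rewrite le_max lexx orbT.
  by rewrite ge_max !le_max xy lexx orbT.
have mk : measurable_fun setT (fun w => A * (z.2 `^ (2 * s) * dist_conj2 z w `^ (- s))).
  apply/measurable_funM/measurable_funM => //.
  apply: (measurableT_comp (f := fun x : R => x `^ (- s)) (g := dist_conj2 z)).
    exact: measurable_powR.
  by apply: measurable_funD; apply: measurable_funX;
    [apply: measurable_funB | apply: measurable_funD].
apply: (eq_measurable_fun (Phi_nonneg \o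
    (fun w => A * (z.2 `^ (2 * s) * dist_conj2 z w `^ (- s))))).
  move=> w _; rewrite /Phi_nonneg /= powRN; congr Phi.
  by apply/max_idPl; rewrite -[_ * _^-1]/(kernel s z w) mulr_ge0 ?kernel_ge0.
by apply: measurableT_comp => //; exact: nondecreasing_measurable.
Qed.

Lemma kernel_ge_carleson_box s a b w : 0 <= s -> carleson_box a b w ->
  (5 `^ s)^-1 <= kernel s ((a + b) / 2, b - a) w.
Proof.
move=> s0 [/andP[aw wb] /andP[w0 wL]].
have L0 : 0 < b - a by apply: lt_trans wL.
set z := ((a + b) / 2, b - a).
have d_gt0 : 0 < dist_conj2 z w by rewrite ltr_wpDl ?sqr_ge0 // exprn_gt0 // addr_gt0.
have d_le : dist_conj2 z w <= 5 * (b - a) ^+ 2 by rewrite /dist_conj2 /=; nra.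
have ds_le : dist_conj2 z w `^ s <= 5 `^ s * z.2 `^ (2 * s).
  rewrite powRrM powR_mulrn ?(ltW L0) // -powRM ?ler0n ?exprn_ge0 ?(ltW L0) //.
  by apply: ge0_ler_powR; rewrite // nnegrE ?(ltW d_gt0) // mulr_ge0 ?exprn_ge0 ?(ltW L0).
rewrite /kernel ler_pdivlMr ?powR_gt0 // mulrC ler_pdivrMr ?powR_gt0 //.
by rewrite mulrC.
Qed.

Definition dyadic_box z (k : nat) := carleson_box (z.1 - 2 ^+ k * z.2) (z.1 + 2 ^+ k * z.2).

Lemma dyadic_box_cover z w : 0 < z.2 -> 0 < w.2 -> exists k, dyadic_box z k w.
Proof.
move=> y0 w0; have [n M_lt] : exists n, (`|w.1 - z.1| + w.2) / z.2 < n%:R.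
  by exists (Num.truncn ((`|w.1 - z.1| + w.2) / z.2)).+1; exact: truncnS_gt.
have n_le : n%:R <= 2 ^+ n :> R by rewrite -natrX ler_nat ltnW // ltn_expl.
have : `|w.1 - z.1| + w.2 < 2 ^+ n * z.2.
  by rewrite -ltr_pdivrMr //; apply: lt_le_trans n_le.
have n1 := ler_norm (w.1 - z.1); have n0 := normr_ge0 (w.1 - z.1).
have n2 : z.1 - w.1 <= `|w.1 - z.1| by rewrite distrC ler_norm.
by exists n; split; apply/andP; split; lra.
Qed.

Lemma dist_conj2_notin_dyadic_box z w k : 0 < z.2 -> 0 < w.2 ->
  ~ dyadic_box z k w -> (2 ^+ k.+1 * z.2) ^+ 2 <= 4 * dist_conj2 z w.
Proof.
case: z => x y /= y0 w0; rewrite /dyadic_box /carleson_box /dist_conj2 /=.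
set t := 2 ^+ k * y; have t0 : 0 <= t by rewrite mulr_ge0 ?exprn_ge0 // ltW.
rewrite [2 ^+ k.+1]exprS -mulrA -/t; clearbody t => notin.
rewrite leNgt; apply/negP => dist_lt; apply: notin.
have h1 : (x - w.1) ^+ 2 < t ^+ 2 by have := sqr_ge0 (y + w.2); nra.
have h2 : (y + w.2) ^+ 2 < t ^+ 2 by have := sqr_ge0 (x - w.1); nra.
by split; apply/andP; split; nra.
Qed.

Lemma dyadic_box_dist_conj2 z w : 0 < z.2 -> 0 < w.2 ->
  exists2 k, dyadic_box z k w & (2 ^+ k * z.2) ^+ 2 <= 4 * dist_conj2 z w.
Proof.
move=> y0 w0; have [n inBn] := dyadic_box_cover y0 w0.
elim: n inBn => [|n IH] inBn.
  exists 0%N => //; rewrite expr0 mul1r /dist_conj2.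
  by have := sqr_ge0 (z.1 - w.1); nra.
have [inBn'|notinBn'] := pselect (dyadic_box z n w); first exact: IH.
by exists n.+1 => //; exact: dist_conj2_notin_dyadic_box.
Qed.

Lemma kernel_le_dyadic s z w k : 0 < s -> 0 < z.2 ->
  (2 ^+ k * z.2) ^+ 2 <= 4 * dist_conj2 z w ->
  kernel s z w <= (2 `^ s) ^+ 2 / ((2 `^ s) ^+ k) ^+ 2.
Proof.
move=> s0 y0 d_ge; set rho := 2 `^ s.
have t_gt0 : 0 < (2 ^+ k * z.2) ^+ 2 by rewrite !exprn_gt0 // mulr_gt0 // exprn_gt0.
have d_gt0 : 0 < dist_conj2 z w by rewrite -(pmulr_rgt0 _ (ltr0n R 4)) (lt_le_trans t_gt0).
have := @ge0_ler_powR R s (ltW s0) _ _ (ltW t_gt0) (mulr_ge0 (ler0n R 4) (ltW d_gt0)) d_ge.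
have -> : ((2 ^+ k * z.2) ^+ 2) `^ s = (rho ^+ k) ^+ 2 * z.2 `^ (2 * s).
  rewrite powRrM powR_mulrn ?(ltW y0) // exprMn powRM ?exprn_ge0 ?(ltW y0) //.
  by congr (_ * _); rewrite powRX ?powRX //; apply: exprn_ge0.
have -> : (4 * dist_conj2 z w) `^ s = rho ^+ 2 * dist_conj2 z w `^ s.
  rewrite powRM ?(ltW d_gt0) // -powRX //; congr (_ * _).
  by rewrite -[4]/(2 * 2)%:R natrM.
move=> ineq; rewrite /kernel ler_pdivrMr ?powR_gt0 // mulrAC ler_pdivlMr ?exprn_gt0 ?powR_gt0 //.
by rewrite mulrC.
Qed.

End upper_half_plane.

Section carleson_kernel.
Variables (R : realType) (Phi1 Phi2 : R -> R) (s q C2 : R).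
Hypotheses (cPhi1 : convex_growth_function Phi1) (cPhi2 : convex_growth_function Phi2).
Hypotheses (s_gt0 : 0 < s) (q_ge1 : 1 <= q) (C2_gt0 : 0 < C2).
Hypothesis Phi2U : upper_type q C2 Phi2.

Definition carleson_condition (mu : {measure set (R * R) -> \bar R}) (C : R) :=
  forall a b : R, a < b ->
    (mu (carleson_box a b) <= (C / Phi2 (ginv Phi1 (1 / (b - a) `^ s)))%:E)%E.

Definition kernel_condition (mu : {measure set (R * R) -> \bar R}) (C : R) :=
  forall z : R * R, 0 < z.2 ->
    (\int[mu]_(w in @upper_half_plane R)
       (Phi2 (ginv Phi1 (1 / z.2 `^ s) * kernel s z w))%:E <= C%:E)%E.

Local Notation rho := (2 `^ s).

Let N := 1 + C2 * (rho ^+ 3) `^ (q - 1).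

Definition kernel_const := N * rho ^+ 3 / (1 - rho^-1).

Definition carleson_const := C2 * (5 `^ s) `^ q.

Let rho_gt1 : 1 < rho.
Proof.
have := @gt0_ltr_powR R s s_gt0 1 2; rewrite powR1; apply; rewrite ?nnegrE ?ler0n //.
exact: ltr1n.
Qed.

Let rho_gt0 : 0 < rho. Proof. exact: lt_trans rho_gt1. Qed.

Let N_gt0 : 0 < N.
Proof. by rewrite ltr_pwDl // mulr_ge0 ?powR_ge0 ?ltW. Qed.

Lemma kernel_const_gt0 : 0 < kernel_const.
Proof.
by rewrite divr_gt0 ?mulr_gt0 ?exprn_gt0 // subr_gt0 invf_lt1.
Qed.

Lemma carleson_const_gt0 : 0 < carleson_const.
Proof. by rewrite mulr_gt0 // powR_gt0 // powR_gt0. Qed.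

Lemma Phi2_ginv_gt0 u : 0 < u -> 0 < Phi2 (ginv Phi1 u).
Proof.
move=> u_gt0; apply: (upper_type_gt0 cPhi2.1 Phi2U).
exact (ginv_gt0 cPhi1.1 u_gt0).
Qed.

Variable mu : {measure set (R * R) -> \bar R}.

Lemma carleson_condition_le C C' : C <= C' ->
  carleson_condition mu C -> carleson_condition mu C'.
Proof.
move=> CC' hA a b ab; apply: le_trans (hA a b ab) _; rewrite lee_fin ler_wpM2r //.
by rewrite invr_ge0 (growth_function_ge0 cPhi2.1) // (ginv_ge0 cPhi1.1) // divr_ge0 ?powR_ge0.
Qed.

Lemma kernel_condition_le C C' : C <= C' ->
  kernel_condition mu C -> kernel_condition mu C'.
Proof. by move=> CC' hB z y_gt0; apply: le_trans (hB z y_gt0) _; rewrite lee_fin. Qed.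

Lemma kernel_carleson_condition C :
  kernel_condition mu C -> carleson_condition mu (carleson_const * C).
Proof.
move=> hB a b ab; have L_gt0 : 0 < b - a by rewrite subr_gt0.
set z := ((a + b) / 2, b - a); set A := ginv Phi1 (1 / (b - a) `^ s).
have A_gt0 : 0 < A by apply: (ginv_gt0 cPhi1.1); rewrite divr_gt0 ?powR_gt0.
have PhiA_gt0 : 0 < Phi2 A by apply: Phi2_ginv_gt0; rewrite divr_gt0 ?powR_gt0.
have five_ge1 : 1 <= 5 `^ s.
  by have := @ler_powR R 5 (ler1n R 5) 0 s (ltW s_gt0); rewrite powRr0.
have five_gt0 : 0 < 5 `^ s by apply: lt_le_trans five_ge1.
set m := Phi2 A / carleson_const.
have m_gt0 : 0 < m by rewrite divr_gt0 // carleson_const_gt0.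
have m_le w : carleson_box a b w -> m <= Phi2 (A * kernel s z w).
  move=> Qw; apply: (@le_trans _ _ (Phi2 (A / 5 `^ s))).
    rewrite /m ler_pdivrMr ?carleson_const_gt0 // mulrC /carleson_const.
    have := Phi2U (divr_gt0 A_gt0 five_gt0) five_ge1.
    by rewrite divfK ?gt_eqF // mulrAC.
  apply: (growth_function_le cPhi2.1); first by rewrite divr_ge0 ?ltW.
  by rewrite ler_wpM2l ?(ltW A_gt0) // kernel_ge_carleson_box // ltW.
have F0 w : upper_half_plane w -> (0 <= (Phi2 (A * kernel s z w))%:E)%E.
  by move=> _; rewrite lee_fin (growth_function_ge0 cPhi2.1) // mulr_ge0 ?kernel_ge0 ?ltW.
have := measure_le_integral mu (@measurable_upper_half_plane R)
  (measurable_carleson_box a b) (@carleson_box_sub R a b) (ltW m_gt0)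
  (measurable_kernel_comp s z cPhi2.1 (ltW A_gt0)) F0 m_le.
move=> /le_trans/(_ (hB z L_gt0)) mQ_le.
have -> : carleson_const * C / Phi2 A = m^-1 * C.
  by rewrite /m; field; rewrite (gt_eqF carleson_const_gt0) (gt_eqF PhiA_gt0).
by rewrite (EFinM m^-1 C) lee_pdivlMl.
Qed.

Lemma carleson_dyadic_box_le C z k : 0 <= C -> 0 < z.2 -> carleson_condition mu C ->
  (mu (dyadic_box z k) <=
     (C / Phi2 (ginv Phi1 (1 / z.2 `^ s) / rho ^+ k.+1))%:E)%E.
Proof.
move=> C0 y_gt0 hA; set A := ginv Phi1 (1 / z.2 `^ s).
have A_gt0 : 0 < A by apply: (ginv_gt0 cPhi1.1); rewrite divr_gt0 ?powR_gt0.
have rhok_gt0 : 0 < rho ^+ k.+1 by rewrite exprn_gt0.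
have PhiX_gt0 : 0 < Phi2 (A / rho ^+ k.+1).
  exact (upper_type_gt0 cPhi2.1 Phi2U (divr_gt0 A_gt0 rhok_gt0)).
have t_gt0 : 0 < 2 ^+ k * z.2 by rewrite mulr_gt0 // exprn_gt0.
have ab : z.1 - 2 ^+ k * z.2 < z.1 + 2 ^+ k * z.2 by lra.
have := hA _ _ ab.
have -> : z.1 + 2 ^+ k * z.2 - (z.1 - 2 ^+ k * z.2) = 2 ^+ k.+1 * z.2.
  by rewrite exprS; ring.
move=> /le_trans; apply; rewrite lee_fin ler_wpM2l // lef_pV2 ?posrE //.
  apply: (growth_function_le cPhi2.1); first exact: ltW (divr_gt0 A_gt0 rhok_gt0).
  have -> : 1 / (2 ^+ k.+1 * z.2) `^ s = (rho ^+ k.+1)^-1 * (1 / z.2 `^ s).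
    by rewrite powRM ?exprn_ge0 ?(ltW y_gt0) // powRX // !div1r invfM.
  rewrite mulrC; apply: (ginvZ_ge cPhi1.1 cPhi1.2); last by rewrite divr_ge0 ?powR_ge0.
  by rewrite invr_ge0 ltW //= invf_le1 // exprn_ege1 // ltW.
by apply: Phi2_ginv_gt0; rewrite divr_gt0 ?powR_gt0 // mulr_gt0 // exprn_gt0.
Qed.

Lemma dyadic_weight_le A k : 0 < A ->
  Phi2 (A * (rho ^+ 2 / (rho ^+ k) ^+ 2)) <=
    N * rho ^+ 3 / rho ^+ k * Phi2 (A / rho ^+ k.+1).
Proof.
move=> A_gt0; have rhok_ge1 : 1 <= rho ^+ k by rewrite exprn_ege1 // ltW.
have rhok_gt0 : 0 < rho ^+ k by apply: lt_le_trans rhok_ge1.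
have -> : A * (rho ^+ 2 / (rho ^+ k) ^+ 2) = (rho ^+ 3 / rho ^+ k) * (A / rho ^+ k.+1).
  rewrite [rho ^+ k.+1]exprS; move: rhok_gt0 rho_gt0; move: (rho) => r rk_gt0 r_gt0.
  by field; rewrite !gt_eqF.
rewrite -[N * rho ^+ 3 / _]mulrA; apply: (upper_typeZ_le cPhi2.1 cPhi2.2 C2_gt0 q_ge1 Phi2U).
- by rewrite divr_gt0 // exprn_gt0.
- by rewrite divr_gt0 // exprn_gt0.
- by rewrite ler_pdivrMr // ler_peMr // exprn_ge0 // ltW.
- by rewrite exprn_ege1 // ltW.
Qed.

Lemma carleson_kernel_condition C : 0 <= C ->
  carleson_condition mu C -> kernel_condition mu (kernel_const * C).
Proof.
move=> C0 hA z y_gt0; set A := ginv Phi1 (1 / z.2 `^ s).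
have A_gt0 : 0 < A by apply: (ginv_gt0 cPhi1.1); rewrite divr_gt0 ?powR_gt0.
pose c k := Phi2 (A * (rho ^+ 2 / (rho ^+ k) ^+ 2)).
have c_ge0 k : 0 <= c k.
  by apply: (growth_function_ge0 cPhi2.1); rewrite mulr_ge0 ?divr_ge0 ?exprn_ge0 ?ltW.
have F0 w : upper_half_plane w -> 0 <= Phi2 (A * kernel s z w).
  by move=> _; rewrite (growth_function_ge0 cPhi2.1) // mulr_ge0 ?kernel_ge0 ?ltW.
have cover w : upper_half_plane w ->
    exists2 k, dyadic_box z k w & Phi2 (A * kernel s z w) <= c k.
  move=> w_gt0; have [k Bk d_ge] := dyadic_box_dist_conj2 y_gt0 w_gt0.
  exists k => //; apply: (growth_function_le cPhi2.1).
    by rewrite mulr_ge0 ?kernel_ge0 ?ltW.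
  by rewrite ler_wpM2l ?(ltW A_gt0) // kernel_le_dyadic.
apply: le_trans (integral_le_cover_nneseries mu (@measurable_upper_half_plane R)
  (fun k => measurable_carleson_box _ _) (fun k => @carleson_box_sub R _ _) c_ge0
  (measurable_kernel_comp s z cPhi2.1 (ltW A_gt0)) F0 cover) _.
have geo : (\sum_(k <oo) (N * rho ^+ 3 * C * rho^-1 ^+ k)%:E = (kernel_const * C)%:E)%E.
  rewrite nneseries_geometric; last by rewrite invr_ge0 ltW //= invf_lt1.
  by rewrite /kernel_const mulrAC.
rewrite -geo; apply: lee_nneseries => [k _ _|k _].
  by rewrite mule_ge0 ?lee_fin.
have PhiX_gt0 : 0 < Phi2 (A / rho ^+ k.+1).
  exact (upper_type_gt0 cPhi2.1 Phi2U (divr_gt0 A_gt0 (exprn_gt0 _ rho_gt0))).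
apply: le_trans (lee_pmul _ _ (lexx _) (carleson_dyadic_box_le k C0 y_gt0 hA)) _.
- by rewrite lee_fin.
- exact: measure_ge0.
rewrite -EFinM lee_fin exprVn -/A.
have CP_ge0 : 0 <= C / Phi2 (A / rho ^+ k.+1) by rewrite divr_ge0 // ltW.
apply: le_trans (ler_wpM2r CP_ge0 (dyadic_weight_le k A_gt0)) _.
rewrite le_eqVlt; apply/orP; left; apply/eqP; field.
by rewrite (gt_eqF PhiX_gt0) gt_eqF // exprn_gt0.
Qed.

End carleson_kernel.

Theorem theorem4p1 (R : realType) (Phi1 Phi2 : R -> R) (s : R) :
  convex_growth_function Phi1 -> convex_growth_function Phi2 ->
  classU_any Phi2 -> 0 < s ->
  let condA (mu : {measure set (R * R) -> \bar R}) (C : R) :=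
    forall a b : R, a < b ->
      (mu (carleson_box a b) <=
       (C / Phi2 (ginv Phi1 (1 / (b - a) `^ s)))%:E)%E in
  let condB (mu : {measure set (R * R) -> \bar R}) (C : R) :=
    forall z : R * R, 0 < z.2 ->
      (\int[mu]_(w in @upper_half_plane R)
         (Phi2 (ginv Phi1 (1 / z.2 `^ s) *
                (z.2 `^ (2 * s) / (dist_conj2 z w) `^ s)))%:E
       <= C%:E)%E in
  (forall mu : {measure set (R * R) -> \bar R},
     (exists C : R, 0 < C /\ condA mu C) <-> (exists C : R, 0 < C /\ condB mu C)) /\
  (exists K : R, 0 < K /\
     forall (mu : {measure set (R * R) -> \bar R}) (C : R), 0 < C ->
       (condA mu C -> condB mu (K * C)) /\ (condB mu C -> condA mu (K * C))).
Proof.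
move=> cPhi1 cPhi2 [q [q_ge1 [_ [[C2 [C2_gt0 Phi2U]] _]]]] s_gt0 condA condB.
set K := kernel_const s q C2 + carleson_const s q C2.
have K_gt0 : 0 < K by rewrite addr_gt0 ?kernel_const_gt0 ?carleson_const_gt0.
have condAB mu C : 0 < C ->
    (condA mu C -> condB mu (K * C)) /\ (condB mu C -> condA mu (K * C)).
  move=> C_gt0; split => [hA|hB].
  - apply: (kernel_condition_le _ (carleson_kernel_condition cPhi1 cPhi2 s_gt0 q_ge1
      C2_gt0 Phi2U (ltW C_gt0) hA)).
    apply: ler_wpM2r; first exact: ltW.
    by rewrite /K lerDl; exact/ltW/carleson_const_gt0.
  - apply: (carleson_condition_le cPhi1 cPhi2 _
      (kernel_carleson_condition cPhi1 cPhi2 s_gt0 C2_gt0 Phi2U hB)).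
    apply: ler_wpM2r; first exact: ltW.
    by rewrite /K lerDr; exact/ltW/kernel_const_gt0.
split; last by exists K.
move=> mu; split=> -[C [C_gt0 h]]; exists (K * C); split; rewrite ?mulr_gt0 //.
- exact: (condAB mu C C_gt0).1 h.
- exact: (condAB mu C C_gt0).2 h.
Qed.
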